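(* Let $T_{ab}$ be any rank-2 tensor. Then $T_{ac}T_b{}^c=f g_{ab}$ for some real $f$ if and only if $T_a{}^b$ is a null-cone preserving map, i.e. $k^aT_a{}^b$ is null or zero for every null vector $k$.
   Context: Lorentzian metric $g_{ab}$ of signature $(+,-,\dots,-)$ in dimension $N\ge2$; a vector $v$ is null if $v\neq0$ and $v_av^a=0$. *)

From mathcomp Require Import all_boot all_order all_algebra.
Set Implicit Arguments. Unset Strict Implicit. Unset Printing Implicit Defensive.
Import Order.TTheory GRing.Theory Num.Theory.
Local Open Scope ring_scope.

(* Components in a fixed (arbitrary) basis of R^N.  Covariant objects
   (T_ab, g_ab) are N x N matrices; a vector k^a is a row vector 'rV_N. *)

Definition eta (R : pzRingType) (N : nat) : 'M[R]_N :=
  diag_mx (\row_(i < N) (if val i == 0%N then 1 else -1)).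

Definition lorentzian (R : comUnitRingType) (N : nat) (g : 'M[R]_N) : Prop :=
  g^T = g /\ exists P : 'M[R]_N, P \in unitmx /\ P^T *m g *m P = eta R N.

Definition gnorm (R : pzRingType) (N : nat) (g : 'M[R]_N) (v : 'rV[R]_N) : R :=
  (v *m g *m v^T) 0 0.

Definition is_null (R : pzRingType) (N : nat) (g : 'M[R]_N) (v : 'rV[R]_N) : Prop :=
  v <> 0 /\ gnorm g v = 0.

(* mixed tensor T_a^b = T_ac g^{cb} *)
Definition mixed (R : comUnitRingType) (N : nat) (g T : 'M[R]_N) : 'M[R]_N :=
  T *m invmx g.

Definition TT (R : comUnitRingType) (N : nat) (g T : 'M[R]_N) : 'M[R]_N :=
  \matrix_(a, b) \sum_(c < N) T a c * mixed g T b c.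

Definition act (R : comUnitRingType) (N : nat) (g T : 'M[R]_N) (k : 'rV[R]_N)
  : 'rV[R]_N := k *m mixed g T.

Definition null_cone_preserving (R : comUnitRingType) (N : nat) (g T : 'M[R]_N)
  : Prop :=
  forall k : 'rV[R]_N, is_null g k -> act g T k = 0 \/ is_null g (act g T k).

(* The quadratic form of the symmetric tensor [M := T_ac T_b^c] is
   [M(k,k) = g(kT, kT)], so [M = f g] forces [kT] to be null whenever [k] is.
   Conversely, if [M] vanishes on the null cone of [g], pass to a basis in which
   [g] is [diag(1,-1,...,-1)]: the null vectors [e_0 +- e_j] give [M_0j = 0] and
   [M_jj = -M_00], and the null vector [5 e_0 + 3 e_i + 4 e_j] gives [M_ij = 0],
   hence [M = M_00 g] in that basis. *)
From Pilot Require Import Defs.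
From mathcomp Require Import all_boot all_order all_algebra.
From mathcomp Require Import ring lra.
Import Order.TTheory GRing.Theory Num.Theory.
Set Implicit Arguments. Unset Strict Implicit.
Local Open Scope ring_scope.

Local Notation gnorm := Defs.gnorm.

Definition bform (R : pzRingType) n (M : 'M[R]_n) (u v : 'rV[R]_n) : R :=
  (u *m M *m v^T) 0 0.

Section BilinearForm.
Variables (R : comNzRingType) (n : nat).
Implicit Types (M : 'M[R]_n) (u v w : 'rV[R]_n).

Lemma gnormE M u : gnorm M u = bform M u u. Proof. by []. Qed.

Lemma bformDl M u v w : bform M (u + v) w = bform M u w + bform M v w.
Proof. by rewrite /bform !mulmxDl mxE. Qed.

Lemma bformDr M u v w : bform M w (u + v) = bform M w u + bform M w v.
Proof. by rewrite /bform linearD mulmxDr mxE. Qed.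

Lemma bformZl M a u w : bform M (a *: u) w = a * bform M u w.
Proof. by rewrite /bform -!scalemxAl mxE. Qed.

Lemma bformZr M a u w : bform M w (a *: u) = a * bform M w u.
Proof. by rewrite /bform linearZ -scalemxAr mxE. Qed.

Lemma bform_delta M p q : bform M (delta_mx 0 p) (delta_mx 0 q) = M p q.
Proof. by rewrite /bform -rowE trmx_delta -colE !mxE. Qed.

Lemma gnorm0 M : gnorm M 0 = 0.
Proof. by rewrite /gnorm !mul0mx mxE. Qed.

Lemma gnormZ f M u : gnorm (f *: M) u = f * gnorm M u.
Proof. by rewrite /gnorm -scalemxAr -scalemxAl mxE. Qed.

Lemma gnorm_congr (P M : 'M[R]_n) u :
  gnorm M (u *m P^T) = gnorm (P^T *m M *m P) u.
Proof. by rewrite /gnorm trmx_mul trmxK !mulmxA. Qed.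

Lemma gnorm_delta3 M a b c p q r : M^T = M ->
  gnorm M (a *: delta_mx 0 p + b *: delta_mx 0 q + c *: delta_mx 0 r) =
  a ^+ 2 * M p p + b ^+ 2 * M q q + c ^+ 2 * M r r
  + 2 * (a * b * M p q + a * c * M p r + b * c * M q r).
Proof.
move=> Msym; have Ms i j : M j i = M i j by rewrite -{1}Msym mxE.
rewrite gnormE !(bformDl, bformZl) !(bformDr, bformZr) !bform_delta.
by rewrite (Ms p q) (Ms p r) (Ms q r); ring.
Qed.

End BilinearForm.

Lemma eta_sym (R : pzRingType) N : (eta R N)^T = eta R N.
Proof. exact: tr_diag_mx. Qed.

Lemma etaE (R : pzRingType) N (p q : 'I_N) :
  eta R N p q = if p == q then (if val p == 0%N then 1 else -1) else 0.
Proof. by rewrite /eta !mxE; case: (p == q); rewrite ?mulr1n ?mulr0n. Qed.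

Lemma eta_unit (R : comUnitRingType) N : eta R N \in unitmx.
Proof.
have sq1 (b : bool) : (if b then 1 else -1) * (if b then 1 else -1) = 1 :> R.
  by case: b; rewrite ?mulr1 ?mulrNN ?mulr1.
have etaK : eta R N *m eta R N = 1%:M.
  by apply/matrixP => i j; rewrite /eta mul_diag_mx !mxE mulrnAr sq1.
by case: (mulmx1_unit etaK).
Qed.

Lemma lorentzian_unit (R : comUnitRingType) N (g : 'M[R]_N) :
  lorentzian g -> g \in unitmx.
Proof.
case=> _ [P [_ gP]]; have := eta_unit R N.
by rewrite -gP !unitmx_mul => /andP[/andP[]].
Qed.

Section EtaNullCone.
Variables (R : realFieldType) (n : nat).
Notation eta := (eta R n.+1).
Variable M : 'M[R]_n.+1.
Hypothesis Msym : M^T = M.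
Hypothesis M_null : forall u, gnorm eta u = 0 -> gnorm M u = 0.

Let val_eq0 (j : 'I_n.+1) : (val j == 0%N) = (j == 0). Proof. by []. Qed.

Let Ms i j : M j i = M i j. Proof. by rewrite -{1}Msym mxE. Qed.

Let M_null3 a b c p q r :
  gnorm eta (a *: delta_mx 0 p + b *: delta_mx 0 q + c *: delta_mx 0 r) = 0 ->
  a ^+ 2 * M p p + b ^+ 2 * M q q + c ^+ 2 * M r r
  + 2 * (a * b * M p q + a * c * M p r + b * c * M q r) = 0.
Proof. by move/M_null; rewrite gnorm_delta3. Qed.

Lemma eta_null_time_space (j : 'I_n.+1) : j != 0 ->
  M 0 j = 0 /\ M j j = - M 0 0.
Proof.
move=> j0; have j0' : (0 == j) = false by rewrite eq_sym (negbTE j0).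
have [eplus eminus] := (@M_null3 1 1 0 0 j j, @M_null3 1 (-1) 0 0 j j).
rewrite !gnorm_delta3 ?eta_sym // !etaE !eqxx j0' (val_eq0 j) (negbTE j0) /=
  in eplus eminus.
have {}eplus := eplus ltac:(lra); have {}eminus := eminus ltac:(lra).
split; lra.
Qed.

Lemma eta_null_space_space (i j : 'I_n.+1) : i != 0 -> j != 0 -> i != j ->
  M i j = 0.
Proof.
move=> i0 j0 ij.
have [[Mi0 Mii] [Mj0 Mjj]] := (eta_null_time_space i0, eta_null_time_space j0).
(* [5 e_0 + 3 e_i + 4 e_j] is null because 5^2 = 3^2 + 4^2. *)
have e := @M_null3 5 3 4 0 i j.
rewrite gnorm_delta3 ?eta_sym // !etaE !eqxx !(eq_sym 0) (val_eq0 i) (val_eq0 j)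
  (negbTE i0) (negbTE j0) (negbTE ij) /= Mi0 Mj0 Mii Mjj in e.
have {}e := e ltac:(lra); lra.
Qed.

Lemma eta_null_form_scalar : M = M 0 0 *: eta.
Proof.
apply/matrixP => i j; rewrite mxE etaE.
have [->|i0] := eqVneq i 0; have [->|j0] := eqVneq j 0.
- by rewrite eqxx mulr1.
- by rewrite mulr0 (eta_null_time_space j0).1.
- by rewrite (negbTE i0) mulr0 Ms (eta_null_time_space i0).1.
- have [<-|ij] := eqVneq i j; last by rewrite mulr0 eta_null_space_space.
  by rewrite (val_eq0 i) (negbTE i0) (eta_null_time_space i0).2 mulrN1.
Qed.

End EtaNullCone.

Lemma lorentzian_null_form_scalar (R : realFieldType) N (g M : 'M[R]_N) :
  lorentzian g -> M^T = M -> (forall k, is_null g k -> gnorm M k = 0) ->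
  exists f, M = f *: g.
Proof.
case: N g M => [|n] g M; first by exists 0; apply/matrixP => -[].
move=> [_ [P [Pu gP]]] Msym M_null.
set MP := P^T *m M *m P.
have MPsym : MP^T = MP by rewrite /MP !trmx_mul trmxK Msym !mulmxA.
have MP_null u : gnorm (eta R n.+1) u = 0 -> gnorm MP u = 0.
  move=> u_null; have [->|u0] := eqVneq u 0; first exact: gnorm0.
  rewrite -gnorm_congr; apply: M_null; split; last by rewrite gnorm_congr gP.
  move=> /(congr1 (mulmx^~ (invmx P^T))).
  by rewrite mulmxK ?unitmx_tr // mul0mx; exact/eqP.
exists (MP 0 0); have := eta_null_form_scalar MPsym MP_null.
rewrite -gP scalemxAl scalemxAr => /(congr1 (fun X => invmx P^T *m X *m invmx P)).
by rewrite !mulmxA mulVmx ?unitmx_tr // !mul1mx !mulmxK.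
Qed.

Section SquareOfTensor.
Variables (R : comUnitRingType) (N : nat) (g T : 'M[R]_N).
Hypothesis gsym : g^T = g.

Lemma TTE : TT g T = T *m invmx g *m T^T.
Proof.
have -> : TT g T = T *m (mixed g T)^T.
  apply/matrixP => a b; rewrite mxE [RHS]mxE; apply: eq_bigr => c _.
  by rewrite [in RHS]mxE.
by rewrite trmx_mul trmx_inv gsym mulmxA.
Qed.

Lemma TT_sym : (TT g T)^T = TT g T.
Proof. by rewrite TTE !trmx_mul trmxK trmx_inv gsym !mulmxA. Qed.

Lemma gnorm_act k : g \in unitmx -> gnorm g (act g T k) = gnorm (TT g T) k.
Proof.
move=> gu; rewrite TTE /gnorm /act /mixed !trmx_mul trmx_inv gsym !mulmxA.
by rewrite -(mulmxA _ g) mulmxV // mulmx1.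
Qed.

End SquareOfTensor.

Theorem mainTheorem8 (R : rcfType) (N : nat) (hN : (2 <= N)%N)
  (g : 'M[R]_N) (hg : lorentzian g) (T : 'M[R]_N) :
  (exists f : R, TT g T = f *: g) <-> null_cone_preserving g T.
Proof.
have gsym := hg.1; have gu := lorentzian_unit hg.
split=> [[f TTf] k [k0 k_null] | preserving].
- have [->|kT0] := eqVneq (act g T k) 0; [by left | right].
  by split; [exact/eqP | rewrite gnorm_act // TTf gnormZ k_null mulr0].
- apply: (lorentzian_null_form_scalar hg); first exact: TT_sym gsym.
  move=> k k_null; rewrite -gnorm_act //.
  by case: (preserving k k_null) => [->|[]]; rewrite ?gnorm0.
Qed.
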